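(* Let $J\subseteq\mathcal I_{int}$ be finite and let $\kappa,\kappa'$ be $J$-interval words over $\Sigma$ with $\kappa\sim\kappa'$. If for every $I\in J$, $\mathsf{first}(\kappa,I)=\mathsf{first}(\kappa',I)$ and $\mathsf{last}(\kappa,I)=\mathsf{last}(\kappa',I)$, then $\kappa\cong\kappa'$.
   Context: Fix a finite set $\Sigma$ of propositions. A timed word over $\Sigma$ is a finite sequence $\rho=(\sigma_1,\tau_1)\cdots(\sigma_n,\tau_n)$ with $\emptyset\neq\sigma_i\subseteq\Sigma$, $\tau_i\in\mathbb R_{\ge0}$, $\tau_1=0$, $\tau_i\le\tau_j$ for $i\le j$; $dom(\rho)=\{1,\dots,n\}$; a pointed timed word is a pair $(\rho,i)$ with $i\in dom(\rho)$. $\mathcal I_{int}$ is the set of open, half-open or closed real intervals with endpoints in $\mathbb Z\cup\{-\infty,\infty\}$. Interval words: let $J\subseteq\mathcal I_{int}$ be finite and $\mathsf{anch}$ a fresh symbol. A $J$-interval word over $\Sigma$ is a finite word $\kappa=a_1\cdots a_n$ with $a_j\subseteq\Sigma\cup J\cup\{\mathsf{anch}\}$ such that exactly one position $i$, denoted $\mathsf{anch}(\kappa)$, has $\mathsf{anch}\in a_i$, and $a_i\subseteq\Sigma\cup\{\mathsf{anch}\}$ there. For $I\in J$, position $j$ is $I$-time restricted iff $I\in a_j$. A pointed timed word $(\rho,i)$ with $\rho=(\sigma_1,\tau_1)\cdots(\sigma_m,\tau_m)$ is consistent with $\kappa$ iff $m=n$, $i=\mathsf{anch}(\kappa)$, $\sigma_j=a_j\cap\Sigma$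 for all $j$, and $\tau_j-\tau_i\in I$ for all $j\neq i$ and all $I\in a_j\cap J$. $\mathsf{Time}(\kappa)$ is the set of pointed timed words consistent with $\kappa$. Interval words $\kappa=a_1\cdots a_n$, $\kappa'=b_1\cdots b_m$ are similar ($\kappa\sim\kappa'$) iff $n=m$, $a_j\cap\Sigma=b_j\cap\Sigma$ for all $j$ and $\mathsf{anch}(\kappa)=\mathsf{anch}(\kappa')$; congruent ($\kappa\cong\kappa'$) iff $\mathsf{Time}(\kappa)=\mathsf{Time}(\kappa')$. $\mathsf{first}(\kappa,I)$ and $\mathsf{last}(\kappa,I)$ denote the least and greatest $I$-time restricted positions of $\kappa$ ($\bot$ if there is none). *)

From HB Require Import structures.
From mathcomp Require Import all_boot all_order all_algebra.
From mathcomp Require Import reals.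
Set Implicit Arguments. Unset Strict Implicit. Unset Printing Implicit Defensive.
Import Order.TTheory GRing.Theory Num.Theory.
Local Open Scope ring_scope.

(* Intervals of I_int: mathcomp intervals with bounds in int (or +-oo),
   open/closed on each side.  Membership of a real number: map the integer
   endpoints into the reals. *)
Definition bound_to_real (R : realType) (b : itv_bound int) : itv_bound R :=
  match b with
  | BSide s z => BSide s (z%:~R : R)
  | BInfty s => BInfty R s
  end.

Definition itv_to_real (R : realType) (I : interval int) : interval R :=
  let: Interval l u := I in Interval (bound_to_real R l) (bound_to_real R u).

Definition in_itv (R : realType) (x : R) (I : interval int) : bool :=
  x \in itv_to_real R I.

(* A letter a_j of an interval word, a subset of Sigma u J u {anch}:
   its propositions, its intervals, and whether it contains anch. *)
Record letter (Sigma : finType) := Letter {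
  lsig : {set Sigma};
  lint : seq (interval int);
  lanch : bool }.

Definition dflt_letter (Sigma : finType) : letter Sigma := Letter set0 [::] false.

(* J-interval word; J (a finite subset of I_int) is given as a list.
   Positions are 0-indexed: position j of the Rocq list is position j+1 of
   the paper. *)
Definition interval_word (Sigma : finType) (J : seq (interval int))
    (k : seq (letter Sigma)) : Prop :=
  [/\ forall j, (j < size k)%N ->
        forall I, I \in lint (nth (dflt_letter Sigma) k j) -> I \in J,
      count (@lanch Sigma) k = 1%N &
      forall j, (j < size k)%N -> lanch (nth (dflt_letter Sigma) k j) ->
        lint (nth (dflt_letter Sigma) k j) = [::]].

Definition anch (Sigma : finType) (k : seq (letter Sigma)) : nat :=
  find (@lanch Sigma) k.

Definition restricted (Sigma : finType) (k : seq (letter Sigma))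
    (I : interval int) (j : nat) : bool :=
  I \in lint (nth (dflt_letter Sigma) k j).

(* first/last I-time-restricted position, None playing the role of bottom *)
Definition first_pos (Sigma : finType) (k : seq (letter Sigma)) (I : interval int)
    : option nat :=
  let P := fun a : letter Sigma => I \in lint a in
  if has P k then Some (find P k) else None.

Definition last_pos (Sigma : finType) (k : seq (letter Sigma)) (I : interval int)
    : option nat :=
  let P := fun a : letter Sigma => I \in lint a in
  if has P k then Some ((size k).-1 - find P (rev k))%N else None.

Definition timed_word (Sigma : finType) (R : realType) (rho : seq ({set Sigma} * R))
    : Prop :=
  [/\ forall j, (j < size rho)%N -> (nth (set0, 0) rho j).1 != set0,
      forall j, (j < size rho)%N -> j = 0%N -> (nth (set0, 0) rho j).2 = 0 &
      forall i j, (i <= j)%N -> (j < size rho)%N ->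
        (nth (set0, 0) rho i).2 <= (nth (set0, 0) rho j).2].

Definition consistent (Sigma : finType) (R : realType) (k : seq (letter Sigma))
    (rho : seq ({set Sigma} * R)) (i : nat) : Prop :=
  [/\ timed_word rho, (i < size rho)%N,
      size rho = size k /\ i = anch k,
      forall j, (j < size k)%N ->
        (nth (set0, 0) rho j).1 = lsig (nth (dflt_letter Sigma) k j) &
      forall j, (j < size k)%N -> j <> i ->
        forall I, I \in lint (nth (dflt_letter Sigma) k j) ->
          in_itv ((nth (set0, 0) rho j).2 - (nth (set0, 0) rho i).2) I].

Definition similar_iw (Sigma : finType) (k k' : seq (letter Sigma)) : Prop :=
  [/\ size k = size k',
      forall j, (j < size k)%N ->
        lsig (nth (dflt_letter Sigma) k j) = lsig (nth (dflt_letter Sigma) k' j) &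
      anch k = anch k'].

Definition congruent_iw (Sigma : finType) (R : realType) (k k' : seq (letter Sigma)) : Prop :=
  forall (rho : seq ({set Sigma} * R)) (i : nat),
    consistent k rho i <-> consistent k' rho i.

From HB Require Import structures.
From mathcomp Require Import all_boot all_order all_algebra.
From mathcomp Require Import reals.
From mathcomp Require Import zify.
Set Implicit Arguments. Unset Strict Implicit. Unset Printing Implicit Defensive.
Import Order.TTheory GRing.Theory Num.Theory.

(* Let (rho, i) be consistent with k; we show it is
   consistent with k' (the converse follows by symmetry of the hypotheses).
   Length, propositions and anchor agree because k ~ k'.  For the time
   constraints, let position j be I-restricted in k'.  Then j lies between
   f = first(k', I) and l = last(k', I), which by hypothesis are also the
   first and last I-restricted positions of k.  Neither is the anchor (the
   anchor letter carries no interval), so consistency with k puts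
   tau_f - tau_i and tau_l - tau_i in I.  Timestamps are monotone, hence
   tau_j - tau_i lies between these two values, and intervals are convex. *)

Lemma itv_convex (d : Order.disp_t) (T : porderType d) (I : interval T)
    (x y z : T) :
  x \in I -> z \in I -> (x <= y)%O -> (y <= z)%O -> y \in I.
Proof.
case: I => l u; rewrite !itv_boundlr => /andP[lx _] /andP[_ zu] xy yz.
apply/andP; split.
- by apply: le_trans lx _; rewrite leBSide.
- by apply: le_trans zu; rewrite leBSide.
Qed.

Section ExtremalIndices.
Variables (T : Type) (x0 : T) (P : pred T).
Implicit Type s : seq T.

Definition last_index s : nat := ((size s).-1 - find P (rev s))%N.

Lemma find_le_index s j : P (nth x0 s j) -> (find P s <= j)%N.
Proof.
move=> Pj; rewrite leqNgt; apply/negP => lt_j.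
by rewrite (before_find x0 lt_j) in Pj.
Qed.

Lemma last_indexP s :
  has P s -> (last_index s < size s)%N /\ P (nth x0 s (last_index s)).
Proof.
move=> hasP; have hasPr : has P (rev s) by rewrite has_rev.
have lt_find : (find P (rev s) < size s)%N by rewrite -(size_rev s) -has_find.
split; first by rewrite /last_index; lia.
have := nth_find x0 hasPr; rewrite nth_rev // /last_index.
by have -> : (size s - (find P (rev s)).+1 = (size s).-1 - find P (rev s))%N
  by lia.
Qed.

Lemma index_le_last_index s j :
  (j < size s)%N -> P (nth x0 s j) -> (j <= last_index s)%N.
Proof.
move=> lt_j Pj.
have Prev : P (nth x0 (rev s) ((size s).-1 - j)).
  by rewrite nth_rev; [have -> : (size s - ((size s).-1 - j).+1 = j)%N by lia|lia].
have := find_le_index Prev; rewrite /last_index; lia.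
Qed.

End ExtremalIndices.

Section FirstLast.
Variable Sigma : finType.
Implicit Types (k : seq (letter Sigma)) (I : interval int).

Lemma first_posP k I f :
  first_pos k I = Some f -> (f < size k)%N /\ restricted k I f.
Proof.
rewrite /first_pos; case: ifP => // hasI [<-].
by split; [rewrite -has_find | exact: (nth_find (dflt_letter Sigma) hasI)].
Qed.

Lemma last_posP k I l :
  last_pos k I = Some l -> (l < size k)%N /\ restricted k I l.
Proof.
by rewrite /last_pos; case: ifP => // hasI [<-]; apply: last_indexP.
Qed.

Lemma restricted_between k I j :
  (j < size k)%N -> restricted k I j ->
  exists f l, [/\ first_pos k I = Some f, last_pos k I = Some l,
                  (f <= j)%N & (j <= l)%N].
Proof.
move=> lt_j rj.
have hasI : has (fun a : letter Sigma => I \in lint a) k.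
  by apply/(has_nthP (dflt_letter Sigma)); exists j.
rewrite /first_pos /last_pos hasI; do 2 eexists; split; try reflexivity.
- exact: find_le_index rj.
- exact: index_le_last_index rj.
Qed.

Lemma anch_unrestricted J k I : interval_word J k -> ~~ restricted k I (anch k).
Proof.
case=> _ one_anch anch_empty.
have hasA : has (@lanch Sigma) k by rewrite has_count one_anch.
have lt_anch : (anch k < size k)%N by rewrite /anch -has_find.
by rewrite /restricted anch_empty //; exact: (nth_find (dflt_letter Sigma) hasA).
Qed.

Lemma similar_iw_sym k k' : similar_iw k k' -> similar_iw k' k.
Proof.
case=> eq_size eq_sig eq_anch; split=> // j.
by rewrite -eq_size => lt_j; rewrite eq_sig.
Qed.

Lemma consistent_transfer (R : realType) J k k' :
  interval_word J k -> interval_word J k' -> similar_iw k k' ->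
  (forall I, I \in J ->
     first_pos k I = first_pos k' I /\ last_pos k I = last_pos k' I) ->
  forall rho i, consistent (R:=R) k rho i -> consistent k' rho i.
Proof.
move=> iwk iwk' [eq_size eq_sig eq_anch] eq_ext rho i
  [tw lt_i [size_rho i_anch] sig_rho time_rho].
have [_ _ mono] := tw.
split=> //; first by rewrite -eq_size -eq_anch.
  by move=> j; rewrite -eq_size => lt_j; rewrite sig_rho // eq_sig.
move=> j lt_j ji I rj.
have IJ : I \in J by case: iwk' => inJ _ _; exact: inJ j lt_j I rj.
have [f [l [ff ll le_fj le_jl]]] := restricted_between lt_j rj.
have [eq_first eq_last] := eq_ext I IJ.
rewrite -eq_first in ff; rewrite -eq_last in ll.
have [lt_f rf] := first_posP ff; have [lt_l rl] := last_posP ll.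
have not_anch := anch_unrestricted I iwk.
have fi : f <> i by move=> ef; move: not_anch; rewrite -i_anch -ef rf.
have li : l <> i by move=> el; move: not_anch; rewrite -i_anch -el rl.
have lt_j_rho : (j < size rho)%N by rewrite size_rho eq_size.
have lt_l_rho : (l < size rho)%N by rewrite size_rho.
apply: (itv_convex (time_rho f lt_f fi I rf) (time_rho l lt_l li I rl)).
- by rewrite lerD2r; apply: mono.
- by rewrite lerD2r; apply: mono.
Qed.

End FirstLast.

Theorem lemma6 (Sigma : finType) (R : realType) (J : seq (interval int))
    (k k' : seq (letter Sigma)) :
  interval_word J k -> interval_word J k' -> similar_iw k k' ->
  (forall I, I \in J -> first_pos k I = first_pos k' I /\ last_pos k I = last_pos k' I) ->
  congruent_iw R k k'.
Proof.
move=> iwk iwk' sim eq_ext rho i; split.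
- exact: consistent_transfer iwk iwk' sim eq_ext rho i.
- apply: consistent_transfer iwk' iwk (similar_iw_sym sim) _ rho i.
  by move=> I IJ; have [-> ->] := eq_ext I IJ.
Qed.
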